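(* Let $\tau>0$ and let $u_\tau$ be a continuous periodic solution of the discrete Lax--Oleinik equation with constant $\bar L(\tau)$. For every $(x,v)\in\widetilde{\mathcal A}^{\tau}_L$ there exists a bi-infinite sequence $\{x_k\}_{k\in\mathbb{Z}}$ such that $x_0=x$, $x_1=x+\tau v$, and for all integers $m<n$, \[ u_\tau(x_n)-u_\tau(x_m)=\sum_{j=m}^{n-1}\mathcal L_\tau(x_j,x_{j+1})-(n-m)\tau\bar L(\tau). \]
   Context: $\mathbb{T}^d=\mathbb{R}^d/\mathbb{Z}^d$; functions on $\mathbb{T}^d$ are identified with $\mathbb{Z}^d$-periodic functions on $\mathbb{R}^d$. $H$ is a Tonelli Hamiltonian on $\mathbb{T}^d\times\mathbb{R}^d$ ($C^2$, $D^2_{pp}H>0$, superlinear in $p$ uniformly in $x$) and $L(x,v)=\sup_p\{p\cdot v-H(x,p)\}$ its Legendre transform. For $\tau>0$, $\mathcal L_\tau(x,y):=\tau L(x,\frac{y-x}{\tau})$. The discrete Lax--Oleinik equation is $u_\tau(y)+\bar L(\tau)\tau=\inf_{x\in\mathbb{R}^d}(u_\tau(x)+\mathcal L_\tau(x,y))$ for all $y$; it is known that there is a unique constant $\bar L(\tau)$ for which a continuous periodic solution $u_\tau$ exists, and such solutions are Lipschitz. A calibrated configuration for $u_\tau(x)$ is a sequence $\{x_{-k}\}_{k\ge0}$ with $x_0=x$ and $u_\tau(x_{-k})+\tau\bar L(\tau)=u_\tau(x_{-k-1})+\mathcal L_\tau(x_{-k-1},x_{-k})$ for all $k\ge0$.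 Define $\widetilde\Sigma^\tau_L:=\{(x,v)\in\mathbb{T}^d\times\mathbb{R}^d:$ there is a calibrated configuration $\{x_{-k}\}_{k\ge0}$ for $u_\tau(x+\tau v)$ with $x_{-1}=x$, $(x_0-x_{-1})/\tau=v\}$. For $n\in\mathbb{N}$ and $(x,v)$, let $\Psi^n_{L,\tau}(x,v)$ be the set of points $\bigl(x_{-n-1},\frac{x_{-n}-x_{-n-1}}{\tau}\bigr)$ over all calibrated configurations $\{x_{-k}\}_{k\ge0}$ for $u_\tau(x+\tau v)$ with $x_{-1}=x$ and $v=(x_0-x_{-1})/\tau$; for a set $S$, $\Psi^n_{L,\tau}(S)$ is the union of $\Psi^n_{L,\tau}(z)$ over $z\in S$. The discrete Aubry set is $\widetilde{\mathcal A}^\tau_L:=\bigcap_{n\in\mathbb{N}}\Psi^n_{L,\tau}(\widetilde\Sigma^\tau_L)$. *)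

From HB Require Import structures.
From mathcomp Require Import all_boot all_order all_algebra.
From mathcomp Require Import all_classical all_reals all_analysis.
Set Implicit Arguments. Unset Strict Implicit. Unset Printing Implicit Defensive.
Import Order.TTheory GRing.Theory Num.Theory.
Import numFieldNormedType.Exports.
Local Open Scope classical_set_scope.
Local Open Scope ring_scope.

Section Defs.
Variables (R : realType) (d : nat).
Notation vec := 'rV[R]_d.

Definition dotv (p v : vec) : R := \sum_(i < d) p 0 i * v 0 i.

Definition zvec (k : 'rV[int]_d) : vec := map_mx (fun z : int => z%:~R) k.

Definition zperiodic (f : vec -> R) := forall x k, f (x + zvec k) = f x.

Definition Hjoint (H : vec -> vec -> R) (z : vec * vec) : R := H z.1 z.2.

(* C^2 on R^d x R^d: all directional derivatives of order 1 and 2 exist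
   everywhere and are continuous (equivalent to C^2). *)
Definition C2 (F : vec * vec -> R) :=
  continuous F /\
  (forall e z, derivable F z e) /\
  (forall e, continuous (fun z => 'D_e F z)) /\
  (forall e1 e2 z, derivable (fun y => 'D_e1 F y) z e2) /\
  (forall e1 e2, continuous (fun z => 'D_e2 (fun y => 'D_e1 F y) z)).

(* Tonelli Hamiltonian on T^d x R^d (lifted to a Z^d-periodic in x function
   on R^d x R^d). *)
Definition Tonelli (H : vec -> vec -> R) :=
  (forall x p k, H (x + zvec k) p = H x p) /\
  C2 (Hjoint H) /\
  (* D^2_pp H > 0 : the quadratic form w |-> w^T D^2_pp H(x,p) w is
     positive definite *)
  (forall x p (w : vec), w != 0 ->
     0 < 'D_((0 : vec), w) (fun y => 'D_((0 : vec), w) (Hjoint H) y) (x, p)) /\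
  (forall K : R, exists C : R, forall x p, K * `|p| - C <= H x p).

Definition Lag (H : vec -> vec -> R) (x v : vec) : R :=
  sup (range (fun p : vec => dotv p v - H x p)).

Definition Ltau (H : vec -> vec -> R) (tau : R) (x y : vec) : R :=
  tau * Lag H x (tau^-1 *: (y - x)).

Definition is_infimum (S : set R) (r : R) :=
  (forall s, S s -> r <= s) /\ (forall eps, 0 < eps -> exists2 s, S s & s < r + eps).

Definition discrete_LO_solution (H : vec -> vec -> R) (tau Lbar : R) (u : vec -> R) :=
  forall y, is_infimum (range (fun x => u x + Ltau H tau x y)) (u y + Lbar * tau).

(* xs k stands for x_{-k}; calibrated configuration for u(x) *)
Definition calibrated (H : vec -> vec -> R) (tau Lbar : R) (u : vec -> R)
  (x : vec) (xs : nat -> vec) :=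
  xs 0%N = x /\
  forall k : nat, u (xs k) + tau * Lbar = u (xs k.+1) + Ltau H tau (xs k.+1) (xs k).

Definition Sigma (H : vec -> vec -> R) (tau Lbar : R) (u : vec -> R) : set (vec * vec) :=
  [set z | exists xs, calibrated H tau Lbar u (z.1 + tau *: z.2) xs /\ xs 1%N = z.1].

Definition Psi (H : vec -> vec -> R) (tau Lbar : R) (u : vec -> R) (n : nat)
  (z : vec * vec) : set (vec * vec) :=
  [set w | exists xs, [/\ calibrated H tau Lbar u (z.1 + tau *: z.2) xs,
       xs 1%N = z.1, tau^-1 *: (xs 0%N - xs 1%N) = z.2 &
       w = (xs n.+1, tau^-1 *: (xs n - xs n.+1))]].

Definition Aubry (H : vec -> vec -> R) (tau Lbar : R) (u : vec -> R) : set (vec * vec) :=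
  [set w | forall n : nat, exists2 z, Sigma H tau Lbar u z & Psi H tau Lbar u n z w].

End Defs.

(* A point (x, v) of the discrete Aubry set lies, for every n, on a backward
   calibrated configuration in which x and x + tau v sit at depths n + 1 and n;
   read forwards, it is a calibrated chain of n + 1 steps starting with x and
   x + tau v.  A calibrated step has bounded length, because u is bounded while
   the action of a step grows linearly with its displacement; so these chains
   lie in a fixed product of compact boxes, and by Tychonoff's theorem they have
   a cluster point in (R^d)^N.  Calibration survives the limit: L_tau is a
   supremum of continuous functions, and the Lax-Oleinik equation supplies the
   reverse inequality.  Gluing this forward orbit to one backward calibrated
   configuration gives the bi-infinite orbit, along which the action identity
   telescopes. *)

From HB Require Import structures.
From mathcomp Require Import all_boot all_order all_algebra.
From mathcomp Require Import all_classical all_reals all_analysis.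
From mathcomp Require Import lra zify.
Import Order.TTheory GRing.Theory Num.Theory.
Import numFieldNormedType.Exports.
Local Open Scope classical_set_scope.
Local Open Scope ring_scope.

Lemma coord_le_norm {R : realType} {d : nat} (w : 'rV[R]_d) i : `|w ord0 i| <= `|w|.
Proof.
by rewrite [leRHS]/Num.norm /= mx_normrE; apply/bigmax_geP; right; exists (ord0, i).
Qed.

Section Periodic.
Context {R : realType} {d : nat}.

Definition floorv (a : 'rV[R]_d) : 'rV[int]_d := map_mx (fun r => Num.floor r) a.

Lemma sub_floorv_ge0_le1 (a : 'rV[R]_d) i :
  0 <= (a - zvec R (floorv a)) ord0 i <= 1.
Proof.
rewrite /zvec /floorv !mxE.
have := floor_le (a ord0 i); have := floorD1_gt (a ord0 i).
rewrite intrD; lra.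
Qed.

Lemma zperiodic_bounded {T : topologicalType} {F : 'rV[R]_d * T -> R} {K : set T} :
  compact K -> continuous F -> (forall x k p, F (x + zvec R k, p) = F (x, p)) ->
  exists M, forall x p, K p -> `|F (x, p)| <= M.
Proof.
move=> cK cF Fper.
pose cube := [set v : 'rV[R]_d | forall i, `[(0:R), 1]%classic (v ord0 i)].
have ccube : compact cube := rV_compact (fun=> @segment_compact R _ _).
have /compact_bounded[M [_ HM]] := continuous_compact
  (@continuous_subspaceT _ _ (cube `*` K) _ cF) (compact_setX ccube cK).
exists (M + 1) => x p Kp.
have -> : x = (x - zvec R (floorv x)) + zvec R (floorv x) by rewrite subrK.
rewrite Fper; apply: (HM (M + 1)); first lra.
by exists (x - zvec R (floorv x), p) => //; split => // i;
  rewrite /= in_itv /= sub_floorv_ge0_le1.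
Qed.

Lemma zperiodic_fun_bounded {f : 'rV[R]_d -> R} : continuous f -> zperiodic f ->
  exists M, forall x, `|f x| <= M.
Proof.
move=> cf fper.
have cF : continuous (fun z : 'rV[R]_d * R => f z.1).
  by move=> z; apply: (@continuous_comp _ _ _ fst f z cvg_fst (cf _)).
have [M HM] := zperiodic_bounded (@compact_set1 _ (0 : R)) cF (fun x k _ => fper x k).
by exists M => x; apply: (HM x 0).
Qed.

End Periodic.

Section Lagrangian.
Context {R : realType} {d : nat} {H : 'rV[R]_d -> 'rV[R]_d -> R}.
Hypothesis H_superlinear : forall K : R, exists C : R, forall x p, K * `|p| - C <= H x p.

Lemma dotv_le (p w : 'rV[R]_d) : dotv p w <= `|p| * \sum_i `|w ord0 i|.
Proof.
rewrite /dotv mulr_sumr; apply: ler_sum => i _.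
by rewrite (le_trans (ler_norm _)) // normrM ler_wpM2r // coord_le_norm.
Qed.

Lemma Lag_has_ubound a w : has_ubound (range (fun p => dotv p w - H a p)).
Proof.
have [C HC] := H_superlinear (\sum_i `|w ord0 i|).
exists C => _ [p _ <-]; have := HC a p; have := dotv_le p w.
rewrite mulrC; lra.
Qed.

Lemma Lag_ge a w p : dotv p w - H a p <= Lag H a w.
Proof. by apply: (ub_le_sup (Lag_has_ubound a w)); exists p. Qed.

Lemma Lag_le a w M : (forall p, dotv p w - H a p <= M) -> Lag H a w <= M.
Proof.
move=> HM; apply: ge_sup; first by exists (dotv 0 w - H a 0), 0.
by move=> _ [p _ <-].
Qed.

Lemma Ltau_leP {tau : R} : 0 < tau -> forall a b r,
  Ltau H tau a b <= r <-> forall p, tau * (dotv p (tau^-1 *: (b - a)) - H a p) <= r.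
Proof.
move=> tau_gt0 a b r; rewrite /Ltau; split => [hL p | hp].
  by rewrite (le_trans _ hL) // ler_pM2l // Lag_ge.
rewrite -ler_pdivlMl //; apply: Lag_le => p.
by rewrite ler_pdivlMl.
Qed.

Lemma dotv_continuous (p : 'rV[R]_d) : continuous (dotv p).
Proof.
apply: continuous_big => [|i _ w]; first exact: add_continuous.
by apply: continuousM; [exact: cst_continuous | exact: coord_continuous].
Qed.

Hypothesis H_continuous : continuous (Hjoint H).

Lemma closed_Ltau_le tau (G : 'rV[R]_d * 'rV[R]_d -> R) : 0 < tau -> continuous G ->
  closed [set ab | Ltau H tau ab.1 ab.2 <= G ab].
Proof.
move=> tau_gt0 cG.
have -> : [set ab | Ltau H tau ab.1 ab.2 <= G ab] = \bigcap_(p in setT)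
  [set ab | tau * (dotv p (tau^-1 *: (ab.2 - ab.1)) - H ab.1 p) - G ab <= 0].
  apply/seteqP; split => ab /=.
    by move=> /(Ltau_leP tau_gt0) hp p _ /=; rewrite subr_le0.
  by move=> hp; apply/(Ltau_leP tau_gt0) => p; rewrite -subr_le0; apply: hp.
apply: closed_bigI => p _.
apply: (@preimage_closed _ _ _ [set r : R | r <= 0]); last exact: closed_le.
move=> ab _; apply: cvgB; last exact: cG.
apply: cvgM; first exact: cvg_cst.
apply: cvgB.
  apply: (@continuous_comp _ _ _ (fun t : 'rV[R]_d * 'rV[R]_d => tau^-1 *: (t.2 - t.1))
    (dotv p) ab _ (dotv_continuous p _)).
  by apply: cvgZr; apply: cvgB; [exact: cvg_snd | exact: cvg_fst].
apply: (@continuous_comp _ _ _ (fun t : 'rV[R]_d * 'rV[R]_d => (t.1, p)) (Hjoint H)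
   ab _ (H_continuous _)).
exact: (cvg_pair cvg_fst (cvg_cst p)).
Qed.

Hypothesis H_periodic : forall x p (k : 'rV[int]_d), H (x + zvec R k) p = H x p.

Lemma Lag_ge_coord : exists M, forall (a w : 'rV[R]_d) i, `|w ord0 i| - M <= Lag H a w.
Proof.
pose box := [set p : 'rV[R]_d | forall j, `[(-1 : R), 1]%classic (p ord0 j)].
have cbox : compact box := rV_compact (fun=> @segment_compact R _ _).
have [M HM] := zperiodic_bounded cbox H_continuous (fun x k p => H_periodic x p k).
exists M => a w i.
pose p : 'rV[R]_d := \row_j (if j == i then Num.sg (w ord0 i) else 0).
have box_p : box p.
  move=> j; rewrite /= in_itv /= mxE -ler_norml.
  case: (j == i); last by rewrite normr0.
  by rewrite normr_sg; case: (w ord0 i != 0).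
have dotv_p : dotv p w = `|w ord0 i|.
  rewrite /dotv (bigD1 i) //= big1 => [|j /negbTE ji]; last by rewrite mxE ji mul0r.
  by rewrite mxE eqxx addr0 normrEsg.
have := Lag_ge a w p; have := HM a p box_p; rewrite dotv_p /Hjoint /=.
have := ler_norm (H a p); lra.
Qed.

End Lagrangian.

Import ArrowAsProduct.

Lemma eval_continuous {T : topologicalType} (k : nat) :
  continuous (fun f : nat -> T => f k).
Proof. exact: (@proj_continuous nat (fun=> T) k). Qed.

Lemma closed_eval_eq {T : topologicalType} (k : nat) (c : T) : hausdorff_space T ->
  closed [set f : nat -> T | f k = c].
Proof.
move=> T_hausdorff; apply: (@preimage_closed _ _ (fun f => f k) [set c]).
  by move=> f _; exact: eval_continuous.
exact: (accessible_closed_set1 (hausdorff_accessible T_hausdorff)).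
Qed.

Lemma bounded_seqs_cluster {R : realType} {d : nat} {Z : nat -> nat -> 'rV[R]_d}
    {r : nat -> R} : (forall n k i, `|Z n k ord0 i| <= r k) ->
  exists X : nat -> 'rV[R]_d,
    forall C, closed C -> (\forall n \near \oo, C (Z n)) -> C X.
Proof.
move=> Zr.
pose A k := [set w : 'rV[R]_d | forall i, `[- r k, r k]%classic (w ord0 i)].
have cA k : compact (A k) := rV_compact (fun=> @segment_compact R _ _).
have Z_A : (Z @ \oo) [set f | forall k, A k (f k)].
  by exists 0%N => // n _ k i; rewrite /= in_itv /= -ler_norml.
have [X [_ clX]] := tychonoff cA _ Z_A.
exists X => C cC ZC; move/closure_id: cC => ->.
by move: clX; rewrite clusterE; apply.
Qed.

Section CalibratedOrbits.
Context {R : realType} {d : nat} {H : 'rV[R]_d -> 'rV[R]_d -> R} {tau Lbar : R}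
  {u : 'rV[R]_d -> R}.
Hypotheses (H_Tonelli : Tonelli H) (tau_gt0 : 0 < tau) (u_continuous : continuous u)
  (u_periodic : zperiodic u) (u_LO : discrete_LO_solution H tau Lbar u).

Let H_periodic : forall x p (k : 'rV[int]_d), H (x + zvec R k) p = H x p :=
  H_Tonelli.1.
Let H_continuous : continuous (Hjoint H) := H_Tonelli.2.1.1.
Let H_superlinear : forall K : R, exists C, forall x p, K * `|p| - C <= H x p :=
  H_Tonelli.2.2.2.

Definition calibrated_step (a b : 'rV[R]_d) := u b + tau * Lbar = u a + Ltau H tau a b.

Lemma LO_subsolution a b : u b + tau * Lbar <= u a + Ltau H tau a b.
Proof. by rewrite mulrC; apply: (u_LO b).1; exists a. Qed.

Lemma calibrated_stepP a b :
  calibrated_step a b <-> Ltau H tau a b <= u b - u a + tau * Lbar.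
Proof. by have := LO_subsolution a b; rewrite /calibrated_step; split; lra. Qed.

Lemma closed_calibrated_step k :
  closed [set f : nat -> 'rV[R]_d | calibrated_step (f k) (f k.+1)].
Proof.
have -> : [set f : nat -> 'rV[R]_d | calibrated_step (f k) (f k.+1)] =
    (fun f => (f k, f k.+1)) @^-1`
    [set ab | Ltau H tau ab.1 ab.2 <= u ab.2 - u ab.1 + tau * Lbar].
  by apply/seteqP; split => f /calibrated_stepP.
apply: preimage_closed.
  by move=> f _; exact: (cvg_pair (eval_continuous k f) (eval_continuous k.+1 f)).
apply: closed_Ltau_le => // ab; apply: cvgD; last exact: cvg_cst.
apply: cvgB.
  exact: (@continuous_comp _ _ _ snd u ab cvg_snd (u_continuous _)).
exact: (@continuous_comp _ _ _ fst u ab cvg_fst (u_continuous _)).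
Qed.

Lemma calibrated_step_bound : exists B, 0 <= B /\
  forall a b i, calibrated_step a b -> `|b ord0 i - a ord0 i| <= B.
Proof.
have [Mu HMu] := zperiodic_fun_bounded u_continuous u_periodic.
have [M HM] := Lag_ge_coord H_superlinear H_continuous H_periodic.
exists (Num.max 0 (2 * Mu + tau * Lbar + tau * M)); split; first by rewrite le_max lexx.
move=> a b i /calibrated_stepP; rewrite le_max /Ltau => hab; apply/orP; right.
set w := tau^-1 *: (b - a) in hab.
have -> : b ord0 i - a ord0 i = tau * w ord0 i.
  by rewrite /w !mxE mulrA mulfV ?gt_eqF // mul1r.
have := HM a w i; rewrite normrM gtr0_norm // -(ler_pM2l tau_gt0).
have := HMu a; have := HMu b; rewrite !ler_norml; lra.
Qed.

Lemma Aubry_backward_configuration x v n : Aubry H tau Lbar u (x, v) ->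
  exists ys : nat -> 'rV[R]_d,
    [/\ ys n.+1 = x, ys n = x + tau *: v & forall k, calibrated_step (ys k.+1) (ys k)].
Proof.
move=> /(_ n)[_ _ [ys [[_ ys_cal] _ _ [-> ->]]]].
exists ys; split => //.
by rewrite scalerA mulfV ?gt_eqF // scale1r addrC subrK.
Qed.

Lemma Aubry_forward_orbit x v : Aubry H tau Lbar u (x, v) ->
  exists X : nat -> 'rV[R]_d,
    [/\ X 0%N = x, X 1%N = x + tau *: v & forall k, calibrated_step (X k) (X k.+1)].
Proof.
move=> xv_Aubry.
have /choice[Y HY] := Aubry_backward_configuration x v ^~ xv_Aubry.
have [B [B_ge0 HB]] := calibrated_step_bound.
(* Truncated subtraction: the reversed chain [Z n] stays at [Y n 0] after step [n]. *)
pose Z n k := Y n (n.+1 - k)%N.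
have Z0 n : Z n 0%N = x by rewrite /Z subn0; case: (HY n).
have Z1 n : Z n 1%N = x + tau *: v by rewrite /Z subSS subn0; case: (HY n).
have Z_step n k : (k <= n)%N -> calibrated_step (Z n k) (Z n k.+1).
  by move=> kn; rewrite /Z subSS subSn //; case: (HY n).
have Z_incr n k i : `|Z n k.+1 ord0 i - Z n k ord0 i| <= B.
  have [kn | nk] := leqP k n; first exact/HB/Z_step.
  by rewrite /Z (_ : n.+1 - k.+1 = n.+1 - k)%N ?subrr ?normr0 //; lia.
have Z_bound n k i : `|Z n k ord0 i| <= `|x| + k%:R * B.
  elim: k => [|k IH]; first by rewrite Z0 mul0r addr0 coord_le_norm.
  have := ler_normD (Z n k.+1 ord0 i - Z n k ord0 i) (Z n k ord0 i).
  have := Z_incr n k i; rewrite subrK -natr1 mulrDl mul1r; lra.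
have [X HX] := bounded_seqs_cluster Z_bound.
have rV_hausdorff : hausdorff_space 'rV[R]_d := @norm_hausdorff R _.
exists X; split.
- by apply: HX (closed_eval_eq 0%N x rV_hausdorff) _; apply: nearW.
- by apply: HX (closed_eval_eq 1%N _ rV_hausdorff) _; apply: nearW.
- move=> k; apply: HX (closed_calibrated_step k) _.
  by exists k => // n; exact: Z_step.
Qed.

Lemma Aubry_biinfinite_orbit x v : Aubry H tau Lbar u (x, v) ->
  exists xs : int -> 'rV[R]_d, [/\ xs 0 = x, xs 1 = x + tau *: v &
    forall j, calibrated_step (xs j) (xs (j + 1))].
Proof.
move=> xv_Aubry.
have /Aubry_forward_orbit[X [X0 X1 X_step]] := xv_Aubry.
have [Y [Y1 _ Y_step]] := Aubry_backward_configuration x v 0 xv_Aubry.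
exists (fun j => match j with Posz k => X k | Negz k => Y k.+2 end).
split => // -[k | [|k]].
- by rewrite (_ : Posz k + 1 = Posz k.+1); [exact: X_step | lia].
- by rewrite (_ : Negz 0 + 1 = Posz 0) ?X0 -?Y1; [exact: Y_step | lia].
- by rewrite (_ : Negz k.+1 + 1 = Negz k); [exact: Y_step | lia].
Qed.

Lemma calibrated_orbit_action (xs : int -> 'rV[R]_d) (m : int) (N : nat) :
  (forall j, calibrated_step (xs j) (xs (j + 1))) ->
  u (xs (m + N%:Z)) - u (xs m) =
    \sum_(0 <= i < N) Ltau H tau (xs (m + i%:Z)) (xs (m + i%:Z + 1)) - N%:R * tau * Lbar.
Proof.
move=> xs_step.
have := telescope_sumr (fun i => u (xs (m + i%:Z))) (leq0n N); rewrite addr0 => <-.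
rewrite -mulrA mulr_natl -[N in _ *+ N]subn0 -sumr_const_nat -sumrB.
apply: eq_bigr => i _; have := xs_step (m + i%:Z).
by rewrite /calibrated_step -addn1 PoszD addrA; lra.
Qed.

End CalibratedOrbits.

Theorem proposition3p5 (R : realType) (d : nat) (H : 'rV[R]_d -> 'rV[R]_d -> R)
  (tau Lbar : R) (u : 'rV[R]_d -> R) :
  Tonelli H -> 0 < tau ->
  continuous u -> zperiodic u -> discrete_LO_solution H tau Lbar u ->
  forall x v, Aubry H tau Lbar u (x, v) ->
  exists xs : int -> 'rV[R]_d,
    [/\ xs 0 = x, xs 1 = x + tau *: v &
      forall m n : int, m < n ->
        u (xs n) - u (xs m) =
          \sum_(0 <= i < absz (n - m)) Ltau H tau (xs (m + i%:Z)) (xs (m + i%:Z + 1))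
          - (n - m)%:~R * tau * Lbar].
Proof.
move=> H_Tonelli tau_gt0 u_cont u_per u_LO x v xv_Aubry.
have /(Aubry_biinfinite_orbit H_Tonelli tau_gt0 u_cont u_per u_LO)[xs [xs0 xs1 xs_step]]
  := xv_Aubry.
exists xs; split => // m n mn.
have [N ->] : exists N : nat, n = m + N%:Z.
  by exists (absz (n - m)); rewrite abszE gtr0_norm ?subr_gt0 // subrKC.
rewrite addrAC subrr add0r.
exact: calibrated_orbit_action.
Qed.
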